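(* Let $n\ge 2$, let $T=\{1,\dots,n\}$ and let $\mathcal T$ be a topology on $T$. Fix an integer $k\ge 1$. Let $A,R,B,S\subseteq T\setminus\{n\}$ with $A\cap R=\emptyset$, $B\cap S=\emptyset$, where every point of $A$ and of $B$ is old (at stage $k$), every point of $R$ and of $S$ is new (at stage $k$), and $R\neq S$. Suppose $A\cup R$, $A\cup R\cup\{n\}$, $B\cup S$ and $B\cup S\cup\{n\}$ are all new $k$-systems of $\mathcal T$. Then $A$, $A\cup\{n\}$, $B$ and $B\cup\{n\}$ are all open in $\mathcal T$.
   Context: For $\alpha\in T$, $\alpha^{*}$ (the covering set of $\alpha$) denotes the smallest open set of $\mathcal T$ containing $\alpha$. For an integer $m\ge 0$, an $m$-system is an open set $P$ of $\mathcal T$ such that $P\setminus\{n\}$ has exactly $m$ points; it is upper if $n\notin P$ and lower if $n\in P$. For fixed $k$, a point $\alpha\neq n$ is called old if $\alpha^{*}$ is an $m$-system for some $m<k$, and new if $\alpha^{*}$ is a $k$-system. A $k$-system is called new if it contains at least one point $p\neq n$ that is not contained in any $m$-system with $m\le k-1$. *)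

From mathcomp Require Import all_boot.
Set Implicit Arguments. Unset Strict Implicit. Unset Printing Implicit Defensive.

(* Since T is finite, closure under binary unions/intersections is
   equivalent to closure under arbitrary unions/finite intersections. *)
Definition is_topology (T : finType) (O : {set {set T}}) : Prop :=
  [/\ set0 \in O, [set: T] \in O,
      (forall U V, U \in O -> V \in O -> U :|: V \in O) &
      (forall U V, U \in O -> V \in O -> U :&: V \in O)].

(* covering set alpha^* : smallest open set containing alpha
   (intersection of all open sets containing alpha, open by finiteness) *)
Definition cover (T : finType) (O : {set {set T}}) (a : T) : {set T} :=
  \bigcap_(U in O | a \in U) U.

(* m-system w.r.t. the distinguished point top (= the point n) *)
Definition msystem (T : finType) (O : {set {set T}}) (top : T) (m : nat)
  (P : {set T}) : Prop :=
  P \in O /\ #|P :\ top| = m.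

Definition old_pt (T : finType) (O : {set {set T}}) (top : T) (k : nat) (a : T) : Prop :=
  a != top /\ exists m, m < k /\ msystem O top m (cover O a).

Definition new_pt (T : finType) (O : {set {set T}}) (top : T) (k : nat) (a : T) : Prop :=
  a != top /\ msystem O top k (cover O a).

Definition new_ksystem (T : finType) (O : {set {set T}}) (top : T) (k : nat)
  (P : {set T}) : Prop :=
  msystem O top k P /\
  exists p, [/\ p \in P, p != top &
                forall m (Q : {set T}), m <= k - 1 -> msystem O top m Q -> p \notin Q].

(* A set is open as soon as it contains the covering set of each of its points.
   If a is old, its covering set has fewer than k points besides n, so it
   cannot contain a new point r, whose covering set (k such points) would lie
   inside it; hence in the open set A ∪ R the covering set of each a ∈ A stays
   in A, and A is open.  For A ∪ {n} it remains to see that the covering set of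
   n meets no r ∈ R.  Otherwise the covering set of r, which carries the k
   points of A ∪ R, would lie in the k-system B ∪ S ∪ {n}, forcing A ∪ R = B ∪ S
   and, as old and new points differ, R = S. *)

From Pilot Require Import Defs.
From mathcomp Require Import all_boot.
Set Implicit Arguments. Unset Strict Implicit. Unset Printing Implicit Defensive.

(* finset also defines a [cover]. *)
Local Notation cover := Defs.cover.

Lemma setU_disjoint_eqr (T : finType) (A R B S : {set T}) :
  [disjoint A & S] -> [disjoint B & R] -> A :|: R = B :|: S -> R = S.
Proof.
wlog suff subRS : A R B S / [disjoint B & R] -> A :|: R = B :|: S -> R \subset S.
  move=> dAS dBR eqARBS.
  by apply/eqP; rewrite eqEsubset (subRS A R B S) // (subRS B S A R).
move=> dBR eqARBS; apply/subsetP => x xR.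
have /setUP[xB | //] : x \in B :|: S by rewrite -eqARBS inE xR orbT.
by rewrite (disjointFr dBR xB) in xR.
Qed.

Section CoveringSets.

Variables (T : finType) (O : {set {set T}}).
Hypothesis topO : is_topology O.

Lemma cover_open a : cover O a \in O.
Proof.
case: topO => _ openT _ openI.
by apply: (big_ind (fun X => X \in O)) => // U /andP[].
Qed.

Lemma mem_cover a : a \in cover O a.
Proof. by apply/bigcapP => U /andP[]. Qed.

Lemma cover_min a U : U \in O -> a \in U -> cover O a \subset U.
Proof. by move=> openU aU; apply: bigcap_inf; rewrite openU aU. Qed.

Lemma cover_trans a b : b \in cover O a -> cover O b \subset cover O a.
Proof. exact/cover_min/cover_open. Qed.

Lemma open_covers_sub (X : {set T}) :
  (forall x, x \in X -> cover O x \subset X) -> X \in O.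
Proof.
move=> coverX.
have -> : X = \bigcup_(x in X) cover O x.
  apply/eqP; rewrite eqEsubset; apply/andP; split; last exact/bigcupsP.
  by apply/subsetP => x xX; apply/bigcupP; exists x; rewrite ?mem_cover.
case: topO => open0 _ openU _.
by apply: (big_ind (fun X => X \in O)) => // x _; apply: cover_open.
Qed.

Variables (top : T) (k : nat).

Lemma old_pt_not_new a : old_pt O top k a -> ~ new_pt O top k a.
Proof.
move=> [_ [m [ltmk [_ carda]]]] [_ [_ cardk]].
by rewrite cardk in carda; rewrite carda ltnn in ltmk.
Qed.

Lemma old_new_disjoint (A R : {set T}) :
  (forall a, a \in A -> old_pt O top k a) ->
  (forall r, r \in R -> new_pt O top k r) -> [disjoint A & R].
Proof.
move=> oldA newR; apply/pred0P => x /=; apply/negP => /andP[xA xR].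
exact: old_pt_not_new (oldA x xA) (newR x xR).
Qed.

Lemma cover_new_pt (P : {set T}) r : msystem O top k P -> r \in P ->
  new_pt O top k r -> cover O r :\ top = P :\ top.
Proof.
move=> [openP cardP] rP [_ [_ cardr]].
by apply/eqP; rewrite eqEcard setSD ?cover_min //= cardP cardr.
Qed.

Lemma new_pt_notin_cover_old a r :
  old_pt O top k a -> new_pt O top k r -> r \notin cover O a.
Proof.
move=> [_ [m [ltmk [_ carda]]]] [_ [_ cardr]]; apply/negP => /cover_trans sub.
have := subset_leq_card (setSD [set top] sub).
by rewrite carda cardr leqNgt ltmk.
Qed.

Lemma cover_old_sub (U R : {set T}) a :
  U :|: R \in O -> (forall r, r \in R -> new_pt O top k r) ->
  a \in U -> old_pt O top k a -> cover O a \subset U.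
Proof.
move=> openUR newR aU olda; apply/subsetP => x xa.
have aUR : a \in U :|: R by rewrite inE aU.
have /setUP[//|xR] := subsetP (cover_min openUR aUR) x xa.
by rewrite (negbTE (new_pt_notin_cover_old olda (newR x xR))) in xa.
Qed.

Lemma open_old_part (A R : {set T}) :
  A :|: R \in O -> (forall a, a \in A -> old_pt O top k a) ->
  (forall r, r \in R -> new_pt O top k r) -> A \in O.
Proof.
move=> openAR oldA newR; apply: open_covers_sub => a aA.
exact: cover_old_sub openAR newR aA (oldA a aA).
Qed.

Lemma notin_old_new_pts (A R : {set T}) :
  (forall a, a \in A -> old_pt O top k a) ->
  (forall r, r \in R -> new_pt O top k r) -> top \notin A :|: R.
Proof.
move=> oldA newR; rewrite inE negb_or.
by apply/andP; split; apply/negP; [move=> /oldA[] | move=> /newR[]]; rewrite eqxx.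
Qed.

Lemma cover_top_sub_old_part (A R B S : {set T}) :
  (forall a, a \in A -> old_pt O top k a) ->
  (forall b, b \in B -> old_pt O top k b) ->
  (forall r, r \in R -> new_pt O top k r) ->
  (forall s, s \in S -> new_pt O top k s) -> R != S ->
  msystem O top k (top |: (A :|: R)) -> msystem O top k (top |: (B :|: S)) ->
  cover O top \subset top |: A.
Proof.
move=> oldA oldB newR newS neqRS sysAR sysBS.
apply/subsetP => x xtop.
have xAR := subsetP (cover_min sysAR.1 (setU11 _ _)) x xtop.
have xBS := subsetP (cover_min sysBS.1 (setU11 _ _)) x xtop.
move: (xAR); rewrite !inE => /or3P[-> // | -> | xR]; rewrite ?orbT //.
have eqARBS : A :|: R = B :|: S.
  rewrite -(setU1K (notin_old_new_pts oldA newR)).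
  rewrite -(setU1K (notin_old_new_pts oldB newS)).
  by rewrite -(cover_new_pt sysAR xAR (newR x xR)) (cover_new_pt sysBS xBS (newR x xR)).
have eqRS := setU_disjoint_eqr (old_new_disjoint oldA newS)
  (old_new_disjoint oldB newR) eqARBS.
by rewrite eqRS eqxx in neqRS.
Qed.

Lemma open_setU1_old_part (A R B S : {set T}) :
  (forall a, a \in A -> old_pt O top k a) ->
  (forall b, b \in B -> old_pt O top k b) ->
  (forall r, r \in R -> new_pt O top k r) ->
  (forall s, s \in S -> new_pt O top k s) -> R != S ->
  msystem O top k (top |: (A :|: R)) -> msystem O top k (top |: (B :|: S)) ->
  top |: A \in O.
Proof.
move=> oldA oldB newR newS neqRS sysAR sysBS.
apply: open_covers_sub => x /setU1P[-> | xA].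
  exact: cover_top_sub_old_part oldB newR newS neqRS sysAR sysBS.
have openAR : (top |: A) :|: R \in O by rewrite -setUA sysAR.1.
exact: cover_old_sub openAR newR (setU1r _ xA) (oldA x xA).
Qed.

End CoveringSets.

Theorem lemma4 (n : nat) (hn : 1 <= n) (O : {set {set 'I_n.+1}})
  (hO : is_topology O) (k : nat) (hk : 1 <= k)
  (A R B S : {set 'I_n.+1}) :
  ord_max \notin A -> ord_max \notin R -> ord_max \notin B -> ord_max \notin S ->
  [disjoint A & R] -> [disjoint B & S] ->
  (forall a, a \in A -> old_pt O ord_max k a) ->
  (forall a, a \in B -> old_pt O ord_max k a) ->
  (forall a, a \in R -> new_pt O ord_max k a) ->
  (forall a, a \in S -> new_pt O ord_max k a) ->
  R != S ->
  new_ksystem O ord_max k (A :|: R) ->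
  new_ksystem O ord_max k (ord_max |: (A :|: R)) ->
  new_ksystem O ord_max k (B :|: S) ->
  new_ksystem O ord_max k (ord_max |: (B :|: S)) ->
  [/\ A \in O, ord_max |: A \in O, B \in O & ord_max |: B \in O].
Proof.
move=> _ _ _ _ _ _ oldA oldB newR newS neqRS
  [[openAR _] _] [sysARt _] [[openBS _] _] [sysBSt _].
have neqSR : S != R by rewrite eq_sym.
split.
- exact: (open_old_part hO openAR oldA newR).
- exact: (open_setU1_old_part hO oldA oldB newR newS neqRS sysARt sysBSt).
- exact: (open_old_part hO openBS oldB newS).
- exact: (open_setU1_old_part hO oldB oldA newS newR neqSR sysBSt sysARt).
Qed.
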